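(* An irreducible plane algebraic curve of degree $d$ has at most $4d$ symmetries, unless it is a line or a circle.
   Context: A plane algebraic curve is an infinite set $Z_{\mathbb{R}}(f)=\{(a,b)\in\mathbb{R}^2: f(a,b)=0\}$ for some nonzero $f\in\mathbb{R}[x,y]$; its degree is the minimum degree of such an $f$; it is irreducible if $f$ can be chosen irreducible over $\mathbb{R}$. A symmetry of a curve $C$ is an isometry $T$ of $\mathbb{R}^2$ with $T(C)=C$. *)

From HB Require Import structures.
From mathcomp Require Import all_boot all_order all_algebra.
From mathcomp Require Import reals.
From mathcomp Require Import mpoly.
Set Implicit Arguments. Unset Strict Implicit. Unset Printing Implicit Defensive.
Import Order.TTheory GRing.Theory Num.Theory.
Local Open Scope ring_scope.

Section PlaneCurves.
Variable R : realType.

(* the point (a,b) of R^2 as a valuation of the two variables x = 'X_0, y = 'X_1 *)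
Definition pt2 (p : R * R) : 'I_2 -> R :=
  fun i => if val i == 0%N then p.1 else p.2.

Definition zero_set (f : {mpoly R[2]}) (p : R * R) : Prop := f.@[pt2 p] = 0.

Definition same_set (A B : R * R -> Prop) : Prop := forall p, A p <-> B p.

Definition infinite_set (A : R * R -> Prop) : Prop :=
  forall s : seq (R * R), exists p, A p /\ p \notin s.

(* total degree of a polynomial (msize = 1 + degree) *)
Definition tdeg (f : {mpoly R[2]}) : nat := (msize f).-1.

Definition plane_curve (C : R * R -> Prop) : Prop :=
  infinite_set C /\ exists f : {mpoly R[2]}, f != 0 /\ same_set C (zero_set f).

Definition curve_degree (C : R * R -> Prop) (d : nat) : Prop :=
  (exists f : {mpoly R[2]}, [/\ f != 0, same_set C (zero_set f) & tdeg f = d]) /\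
  (forall f : {mpoly R[2]}, f != 0 -> same_set C (zero_set f) -> (d <= tdeg f)%N).

Definition mirreducible (f : {mpoly R[2]}) : Prop :=
  (1 < msize f)%N /\
  forall g h : {mpoly R[2]}, f = g * h -> (msize g <= 1)%N \/ (msize h <= 1)%N.

Definition irreducible_curve (C : R * R -> Prop) : Prop :=
  exists f : {mpoly R[2]}, mirreducible f /\ same_set C (zero_set f).

Definition sqdist (p q : R * R) : R := (p.1 - q.1) ^+ 2 + (p.2 - q.2) ^+ 2.

Definition isometry (T : R * R -> R * R) : Prop :=
  forall p q, sqdist (T p) (T q) = sqdist p q.

Definition symmetry_of (C : R * R -> Prop) (T : R * R -> R * R) : Prop :=
  isometry T /\ forall p, (exists q, C q /\ T q = p) <-> C p.

Definition is_line (C : R * R -> Prop) : Prop :=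
  exists a b c : R, (a, b) != (0, 0) /\
    forall p : R * R, C p <-> a * p.1 + b * p.2 + c = 0.

Definition is_circle (C : R * R -> Prop) : Prop :=
  exists a b r : R, 0 < r /\
    forall p : R * R, C p <-> (p.1 - a) ^+ 2 + (p.2 - b) ^+ 2 = r ^+ 2.

End PlaneCurves.

(* Every isometry of the plane is direct, p |-> w p + t, or opposite,
   p |-> w conj(p) + t, with |w| = 1 in complex notation.  A nontrivial
   translation symmetry would put the points p + kD (k in N) of a line into C;
   a degree-d equation of C restricted to that line then has infinitely many
   roots, so C contains the line, and irreducibility forces C to be the line.
   Consequently all nontrivial rotations among the symmetries share one centre
   c, since the commutator of rotations about distinct centres is a nontrivial
   translation.  If there were more than 2d direct symmetries, the orbit of a
   point p != c of C would give more than 2d points of C on a circle about c;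
   pulling the equation back along a rational parametrisation of the circle
   yields a polynomial of degree at most 2d with more than 2d roots, so C
   contains the circle minus a point and, again by irreducibility, C is the
   circle.  Composing with one fixed opposite symmetry maps the opposite
   symmetries injectively to direct ones, whence at most 4d symmetries. *)

From HB Require Import structures.
From mathcomp Require Import all_boot all_order all_algebra.
From mathcomp Require Import reals.
From mathcomp Require Import mpoly.
From mathcomp Require Import zify ring lra.
From Stdlib Require Import FunctionalExtensionality.
Set Implicit Arguments. Unset Strict Implicit. Unset Printing Implicit Defensive.
Import Order.TTheory GRing.Theory Num.Theory.
Local Open Scope ring_scope.

Section InfinitelyManyRoots.
Variable R : idomainType.

Lemma poly_eq0_inj_roots (P : {poly R}) (xs : nat -> R) (e : R) :
  injective xs -> (forall k, xs k != e -> root P (xs k)) -> P = 0.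
Proof.
move=> xs_inj rootP; set s := [seq xs k | k <- iota 0 (size P).+1].
have s_uniq : uniq s by rewrite map_inj_uniq ?iota_uniq.
apply: (@roots_geq_poly_eq0 _ _ (rem e s)).
- apply/allP => x; rewrite (rem_filter _ s_uniq) mem_filter => /andP [/= xe].
  by case/mapP=> k _ xk; rewrite xk rootP // -xk.
- exact: rem_uniq.
- have [es|/rem_id->] := boolP (e \in s); last by rewrite size_map size_iota.
  by rewrite size_rem // size_map size_iota.
Qed.

End InfinitelyManyRoots.

Lemma poly_eq0_nat_roots (R : numDomainType) (P : {poly R}) :
  (forall k : nat, root P k%:R) -> P = 0.
Proof.
move=> rootP; apply: (@poly_eq0_inj_roots _ _ (fun k => k%:R) 0) => [m n /eqP|k _] //.
by rewrite eqr_nat => /eqP.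
Qed.

Lemma ord2_other (i j k : 'I_2) : i != j -> k != i -> k = j.
Proof.
by case: i j k => [[|[|?]] ?] [[|[|?]] ?] [[|[|?]] ?]; rewrite //= => _ _; apply/val_inj.
Qed.

Section BivariateAsIterated.
Variable R : comNzRingType.
Notation P2 := {poly {poly R}}.
Notation MP := {mpoly R[2]}.

Lemma mmap_rmorph (S S' : comNzRingType) (f : {rmorphism R -> S}) (h : 'I_2 -> S)
    (phi : {rmorphism S -> S'}) (p : MP) :
  phi (mmap f h p) = mmap (phi \o f) (phi \o h) p.
Proof.
rewrite /mmap rmorph_sum; apply: eq_bigr => m _.
rewrite rmorphM /mmap1 rmorph_prod /=; congr (_ * _).
by apply: eq_bigr => i _; rewrite rmorphXn.
Qed.

Lemma eq_mmap (S : comNzRingType) (f1 f2 : R -> S) (h1 h2 : 'I_2 -> S) (p : MP) :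
  f1 =1 f2 -> h1 =1 h2 -> mmap f1 h1 p = mmap f2 h2 p.
Proof. by move=> ef eh; apply: eq_bigr => m _; rewrite ef (mmap1_eq _ eh). Qed.

(* [poly2_of i f] is [f] read as a polynomial in [x_i] whose coefficients are
   polynomials in the other variable. *)
Definition poly2_var (i k : 'I_2) : P2 := if k == i then 'X else 'X%:P.
Definition poly2_of (i : 'I_2) (f : MP) : P2 :=
  mmap (polyC \o polyC : {rmorphism R -> P2}) (poly2_var i) f.

Lemma mpolyX_comm (j : 'I_2) : commr_rmorph (@mpolyC 2 R) 'X_j.
Proof. by move=> x; rewrite /GRing.comm mulrC. Qed.
Definition mpoly_of_coef (j : 'I_2) : {rmorphism {poly R} -> MP} :=
  horner_morph (mpolyX_comm j).
Lemma mpoly_of_coef_comm (i j : 'I_2) : commr_rmorph (mpoly_of_coef j) 'X_i.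
Proof. by move=> x; rewrite /GRing.comm mulrC. Qed.
Definition mpoly_of_poly2 (i j : 'I_2) : {rmorphism P2 -> MP} :=
  horner_morph (mpoly_of_coef_comm i j).

Lemma horner_comm (i j : 'I_2) (v : 'I_2 -> R) : commr_rmorph (horner_eval (v j)) (v i).
Proof. by move=> x; rewrite /GRing.comm mulrC. Qed.
Definition poly2_eval (i j : 'I_2) (v : 'I_2 -> R) : {rmorphism P2 -> R} :=
  horner_morph (horner_comm i j v).

Lemma poly2_evalC i j v (c : {poly R}) : poly2_eval i j v c%:P = c.[v j].
Proof. exact: (horner_morphC (horner_comm i j v)). Qed.

Lemma poly2_evalX i j v : poly2_eval i j v 'X = v i.
Proof. exact: (horner_morphX (horner_comm i j v)). Qed.

Lemma poly2_ofK (i j : 'I_2) (f : MP) : i != j -> mpoly_of_poly2 i j (poly2_of i f) = f.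
Proof.
move=> ij; rewrite mmap_rmorph -[RHS]comp_mpoly_id; apply: eq_mmap => [c|k] /=.
  rewrite (horner_morphC (mpoly_of_coef_comm i j)); exact: (horner_morphC (mpolyX_comm j)).
rewrite tnth_map tnth_ord_tuple /poly2_var; case: eqP => [->|/eqP ki].
  exact: (horner_morphX (mpoly_of_coef_comm i j)).
rewrite (horner_morphC (mpoly_of_coef_comm i j)) [mpoly_of_coef j _](horner_morphX (mpolyX_comm j)).
by rewrite (ord2_other ij ki).
Qed.

Lemma poly2_eval_of (i j : 'I_2) v (f : MP) : i != j -> poly2_eval i j v (poly2_of i f) = f.@[v].
Proof.
move=> ij; rewrite mmap_rmorph; apply: eq_mmap => [c|k] /=.
  rewrite (horner_morphC (horner_comm i j v)); exact: hornerC.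
rewrite /poly2_var; case: eqP => [->|/eqP ki].
  exact: (horner_morphX (horner_comm i j v)).
rewrite (horner_morphC (horner_comm i j v)) (ord2_other ij ki); exact: hornerX.
Qed.

Lemma meval_mpoly_of_coef j v (c : {poly R}) : (mpoly_of_coef j c).@[v] = c.[v j].
Proof.
rewrite /= /horner_morph -horner_map -[X in _.[X]]/(meval v 'X_j) mevalXU.
by rewrite -map_poly_comp (@eq_map_poly _ _ _ idfun) ?map_poly_id // => x /=; rewrite mevalC.
Qed.

Lemma meval_mpoly_of_poly2 i j v (P : P2) : (mpoly_of_poly2 i j P).@[v] = poly2_eval i j v P.
Proof.
rewrite /= /horner_morph -horner_map -[X in _.[X]]/(meval v 'X_i) mevalXU -map_poly_comp.
by congr (_.[_]); apply: eq_map_poly => x /=; rewrite meval_mpoly_of_coef.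
Qed.

End BivariateAsIterated.
Arguments mpoly_of_poly2 {R}.

Section MonicFactor.
Variable R : realType.
Notation P2 := {poly {poly R}}.
Notation MP := {mpoly R[2]}.
Notation rmodp := Pdiv.CommonRing.rmodp.
Notation rdivp := Pdiv.CommonRing.rdivp.

Lemma rmodp_eval_eq0 (i j : 'I_2) (f : MP) (Q : P2) (v : 'I_2 -> R) :
  i != j -> Q \is monic -> poly2_eval i j v Q = 0 -> f.@[v] = 0 ->
  poly2_eval i j v (rmodp (poly2_of i f) Q) = 0.
Proof.
move=> ij Qmonic Qv0 fv0.
have := congr1 (poly2_eval i j v) (Pdiv.RingMonic.rdivp_eq Qmonic (poly2_of i f)).
by rewrite rmorphD rmorphM Qv0 mulr0 add0r poly2_eval_of // fv0 => <-.
Qed.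

Lemma mirreducible_monic_factor (i j : 'I_2) (f : MP) (Q : P2) :
  i != j -> mirreducible f -> Q \is monic -> rmodp (poly2_of i f) Q = 0 ->
  (exists v1 v2, poly2_eval i j v1 Q != poly2_eval i j v2 Q) ->
  exists2 c : R, c != 0 & forall v, f.@[v] = c * poly2_eval i j v Q.
Proof.
move=> ij [f_nc f_irr] Qmonic rem0 [v1 [v2 Q_nc]].
set h := mpoly_of_poly2 i j (rdivp (poly2_of i f) Q).
have fE : f = h * mpoly_of_poly2 i j Q.
  have := Pdiv.RingMonic.rdivp_eq Qmonic (poly2_of i f).
  rewrite rem0 addr0 => /(congr1 (mpoly_of_poly2 i j)); rewrite poly2_ofK // => ->.
  exact: rmorphM.
case: (f_irr _ _ fE) => [|] /msize1_polyC hE; last first.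
  by move: Q_nc; rewrite -!meval_mpoly_of_poly2 hE !mevalC eqxx.
exists h@_0; last by move=> v; rewrite {1}fE mevalM {1}hE mevalC meval_mpoly_of_poly2.
by apply: contraTneq f_nc => h0; rewrite fE hE h0 mpolyC0 mul0r msize0.
Qed.

Lemma mirreducible_vanishing_on_line (i j : 'I_2) (f : MP) (al be : R) :
  i != j -> mirreducible f ->
  (forall v : 'I_2 -> R, v i = al * v j + be -> f.@[v] = 0) ->
  exists2 c : R, c != 0 & forall v, f.@[v] = c * (v i - (al * v j + be)).
Proof.
move=> ij irr f0.
set Q : P2 := 'X - (al%:P * 'X + be%:P)%:P.
have Qmonic : Q \is monic by rewrite monicXsubC.
have QE v : poly2_eval i j v Q = v i - (al * v j + be).
  by rewrite rmorphB poly2_evalX poly2_evalC hornerD hornerCM hornerX hornerC.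
have [||c c0 fE] := mirreducible_monic_factor ij irr Qmonic; last first.
- by exists c => // v; rewrite fE QE.
- have /negbTE ji : j != i by rewrite eq_sym.
  exists (fun _ => 0), (fun k => if k == i then 1 else 0); rewrite !QE eqxx ji.
  by apply/eqP => ?; have /eqP := oner_neq0 R; apply; lra.
set rm := rmodp _ Q; have rm_size : (size rm <= 1)%N.
  by have := Pdiv.CommonRing.ltn_rmodpN0 (poly2_of i f) (monic_neq0 Qmonic); rewrite size_XsubC.
rewrite (size1_polyC rm_size) (_ : rm`_0 = 0) ?polyC0 //.
apply: poly_eq0_nat_roots => k; set y : R := k%:R.
pose v k := if k == i then al * y + be else y.
have vj : v j = y by rewrite /v eq_sym (negbTE ij).
have vi : v i = al * y + be by rewrite /v eqxx.
have rm_v : poly2_eval i j v rm = 0.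
  apply: rmodp_eval_eq0 => //; first by rewrite QE vi vj subrr.
  by apply: f0; rewrite vi vj.
by move: rm_v; rewrite {1}(size1_polyC rm_size) poly2_evalC vj => /eqP.
Qed.

End MonicFactor.

Section UnitCircleParametrization.
Variable R : realFieldType.

Definition unit_vec (w : R * R) := w.1 ^+ 2 + w.2 ^+ 2 = 1.

(* Inverse stereographic projection from the point (1, 0) of the unit circle. *)
Definition circ_param (t : R) : R * R :=
  ((t ^+ 2 - 1) / (t ^+ 2 + 1), (2 * t) / (t ^+ 2 + 1)).

Lemma sqr_add1_neq0 (t : R) : t ^+ 2 + 1 != 0.
Proof. by rewrite paddr_eq0 ?sqr_ge0 // negb_and oner_eq0 orbT. Qed.

Lemma circ_param_unit (t : R) : (circ_param t).1 ^+ 2 + (circ_param t).2 ^+ 2 = 1.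
Proof.
rewrite /= !expr_div_n -mulrDl.
have -> : (t ^+ 2 - 1) ^+ 2 + (2 * t) ^+ 2 = (t ^+ 2 + 1) ^+ 2 by ring.
by rewrite divff // expf_neq0 // sqr_add1_neq0.
Qed.

Lemma circ_param_nat_inj : injective (fun k : nat => (circ_param k%:R).1).
Proof.
move=> k l /= E.
have E2 : ((k%:R : R) ^+ 2 - 1) * (l%:R ^+ 2 + 1) = (l%:R ^+ 2 - 1) * (k%:R ^+ 2 + 1).
  by apply/eqP; rewrite -eqr_div ?sqr_add1_neq0 ?E.
have : (k%:R : R) ^+ 2 = l%:R ^+ 2 by lra.
by rewrite -!natrX => /eqP; rewrite eqr_nat eqn_exp2r // => /eqP.
Qed.

Lemma circ_paramK (a b : R) : a ^+ 2 + b ^+ 2 = 1 -> a != 1 ->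
  circ_param (b / (1 - a)) = (a, b).
Proof.
move=> ab1 a1; have a1' : 1 - a != 0 by rewrite subr_eq0 eq_sym.
have sq : (b / (1 - a)) ^+ 2 = (1 + a) / (1 - a).
  rewrite expr_div_n; have -> : b ^+ 2 = (1 - a) * (1 + a) by nra.
  by field.
by rewrite /circ_param sq; congr (_, _); field; rewrite a1' /=; apply/eqP => ?; lra.
Qed.

End UnitCircleParametrization.

Lemma affine_eq0_at2 (F : fieldType) (A B y1 y2 : F) :
  y1 != y2 -> A + B * y1 = 0 -> A + B * y2 = 0 -> A = 0 /\ B = 0.
Proof.
move=> y12 e1 e2; have : B * (y1 - y2) = (A + B * y1) - (A + B * y2) by ring.
rewrite e1 e2 subrr => /eqP; rewrite mulf_eq0 subr_eq0 (negbTE y12) orbF => /eqP B0.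
by move: e1; rewrite B0 mul0r addr0.
Qed.

Lemma sqdist_shift (R : realType) (c u : R * R) (r : R) :
  sqdist (c.1 + r * u.1, c.2 + r * u.2) c = r ^+ 2 * (u.1 ^+ 2 + u.2 ^+ 2).
Proof. by rewrite /sqdist /=; ring. Qed.

Section CircleFactor.
Variable R : realType.
Notation P2 := {poly {poly R}}.
Notation MP := {mpoly R[2]}.
Notation rmodp := Pdiv.CommonRing.rmodp.

Lemma poly2_eval_size2 (i j : 'I_2) (v : 'I_2 -> R) (P : P2) : (size P <= 2)%N ->
  poly2_eval i j v P = (P`_0).[v j] + (P`_1).[v j] * v i.
Proof.
move=> sizeP; rewrite /= /horner_morph (@horner_coef_wide _ 2); last first.
  exact: leq_trans (size_poly _ _) sizeP.
by rewrite big_ord_recr big_ord1 /= !coef_map /= expr0 expr1 mulr1.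
Qed.

Lemma mirreducible_vanishing_on_circle (f : MP) (c M : R * R) (r : R) :
  0 < r -> mirreducible f ->
  (forall p, sqdist p c = r ^+ 2 -> p != M -> f.@[pt2 p] = 0) ->
  exists2 k : R, k != 0 & forall p, f.@[pt2 p] = k * (sqdist p c - r ^+ 2).
Proof.
move=> r0 irr f0; have ij : (ord_max : 'I_2) != ord0 by [].
set Q_low : P2 := ((- (2 * c.2))%:P)%:P * 'X + (('X - c.1%:P) ^+ 2 + (c.2 ^+ 2 - r ^+ 2)%:P)%:P.
set Q : P2 := 'X ^+ 2 + Q_low.
have Q_low_size : (size Q_low <= 2)%N.
  apply: leq_trans (size_polyD _ _) _; rewrite geq_max; apply/andP; split.
    apply: leq_trans (size_polyMleq _ _) _; rewrite size_polyX.
    by have := size_polyC_leq1 ((- (2 * c.2))%:P : {poly R}); case: (size _) => [|[|]].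
  exact: leq_trans (size_polyC_leq1 _) _.
have Q_size : size Q = 3 by rewrite /Q size_polyDl ?size_polyXn.
have Qmonic : Q \is monic by rewrite monicE /Q lead_coefDl ?lead_coefXn // size_polyXn.
have QE v : poly2_eval ord_max ord0 v Q = sqdist (v ord0, v ord_max) c - r ^+ 2.
  rewrite !rmorphD !rmorphM !poly2_evalX !poly2_evalC /sqdist /=.
  by rewrite !hornerE /=; ring.
have [||k k0 fE] := mirreducible_monic_factor ij irr Qmonic; last first.
- by exists k => // -[x y]; rewrite -[pt2 _]/(fun i : 'I_2 => _) fE QE.
- exists (fun i : 'I_2 => if i == ord0 then c.1 else c.2).
  exists (fun i : 'I_2 => if i == ord0 then c.1 + r else c.2); rewrite !QE /sqdist /=.
  rewrite !subrr (_ : c.1 + r - c.1 = r) ?expr0n /= ?add0r; last by ring.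
  apply/eqP => ?; have /eqP : r ^+ 2 = 0 by lra.
  by rewrite expf_eq0 (gt_eqF r0) andbF.
set rm := rmodp _ Q.
have rm_size : (size rm <= 2)%N.
  by have := Pdiv.CommonRing.ltn_rmodpN0 (poly2_of ord_max f) (monic_neq0 Qmonic); rewrite Q_size.
have rm0 x y : sqdist (x, y) c = r ^+ 2 -> (x, y) != M -> (rm`_0).[x] + (rm`_1).[x] * y = 0.
  move=> on_circ notM; pose v (i : 'I_2) := if i == ord0 then x else y.
  rewrite -(poly2_eval_size2 ord_max ord0 v rm_size); apply: rmodp_eval_eq0 => //.
    by rewrite QE on_circ subrr.
  by rewrite (@meval_eq _ _ _ (pt2 (x, y))) ?f0 // => -[[|[|?]] ?].
(* Above each of infinitely many abscissae lie two points of the circle, so the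
   remainder, affine in [y], vanishes there identically. *)
pose u k := circ_param (k.+1%:R : R).
pose xs k := c.1 + r * (u k).1.
have xs_inj : injective xs.
  by move=> k l /addrI /(mulfI (lt0r_neq0 r0)) /circ_param_nat_inj [].
have coefs_vanish k : xs k != M.1 -> (rm`_0).[xs k] = 0 /\ (rm`_1).[xs k] = 0.
  move=> xM; apply: (@affine_eq0_at2 _ _ _ (c.2 + r * (u k).2) (c.2 + r * - (u k).2)).
  - rewrite (inj_eq (addrI _)) (inj_eq (mulfI (lt0r_neq0 r0))) -subr_eq0 opprK -mulr2n.
    by rewrite mulrn_eq0 /= mulf_eq0 ?mulf_eq0 !pnatr_eq0 invr_eq0 (negbTE (sqr_add1_neq0 _)).
  - apply: rm0; first by rewrite sqdist_shift circ_param_unit mulr1.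
    by apply: contraNneq xM => <-.
  - apply: rm0.
      by rewrite (sqdist_shift c ((u k).1, - (u k).2)) /= sqrrN circ_param_unit mulr1.
    by apply: contraNneq xM => <-.
have [c0 c1] : rm`_0 = 0 /\ rm`_1 = 0.
  by split; apply: (poly_eq0_inj_roots (e := M.1) xs_inj) => k /coefs_vanish [? ?]; apply/eqP.
apply/polyP => -[|[|n]]; rewrite coef0 ?c0 ?c1 // nth_default //.
exact: leq_trans rm_size _.
Qed.

End CircleFactor.

Lemma mdeg2 (m : 'X_{1..2}) : mdeg m = (m ord0 + m ord_max)%N.
Proof. by rewrite mdegE big_ord_recr big_ord1 /=; congr (m _ + m _); apply/val_inj. Qed.

Section RationalCurves.
Variable R : realType.
Notation MP := {mpoly R[2]}.

Lemma meval_pt2 (g : MP) (x y : R) :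
  g.@[pt2 (x, y)] = \sum_(m <- msupp g) g@_m * (x ^+ m ord0 * y ^+ m ord_max).
Proof.
rewrite mevalE; apply: eq_bigr => m _; rewrite big_ord_recr big_ord1 /=.
by congr (_ * (_ ^+ m _ * _ ^+ m _)); apply/val_inj.
Qed.

(* [hsubst g hx hy hw] is the homogenised pull-back of [g] along the rational
   curve [t |-> (hx t / hw t, hy t / hw t)]. *)
Definition hsubst (g : MP) (hx hy hw : {poly R}) : {poly R} :=
  \sum_(m <- msupp g) g@_m *: (hx ^+ m ord0 * hy ^+ m ord_max * hw ^+ (tdeg g - mdeg m)).

Lemma mdeg_le_tdeg (g : MP) m : m \in msupp g -> (mdeg m <= tdeg g)%N.
Proof. by move=> /msize_mdeg_lt; rewrite /tdeg; lia. Qed.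

Lemma size_hsubst (g : MP) (hx hy hw : {poly R}) k :
  (size hx <= k.+1)%N -> (size hy <= k.+1)%N -> (size hw <= k.+1)%N ->
  (size (hsubst g hx hy hw) <= (k * tdeg g).+1)%N.
Proof.
have size_mul (p q : {poly R}) a b :
    (size p <= a.+1)%N -> (size q <= b.+1)%N -> (size (p * q)%R <= (a + b).+1)%N.
  by move=> ? ?; apply: leq_trans (size_polyMleq p q) _; lia.
have size_exp (p : {poly R}) e : (size p <= k.+1)%N -> (size (p ^+ e)%R <= (k * e).+1)%N.
  move=> sp; elim: e => [|e IH]; first by rewrite expr0 size_poly1.
  by rewrite exprS mulnS; apply: size_mul.
move=> sx sy sw; rewrite /hsubst big_seq.
apply: (big_ind (fun p : {poly R} => size p <= _)%N) => [|p q sp sq|m gm].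
- by rewrite size_poly0.
- by apply: leq_trans (size_polyD p q) _; rewrite geq_max sp sq.
apply: leq_trans (size_scale_leq _ _) _.
have -> : (k * tdeg g = k * m ord0 + k * m ord_max + k * (tdeg g - mdeg m))%N.
  by rewrite -!mulnDr -mdeg2 subnKC ?mdeg_le_tdeg.
have := size_exp _ (m ord0) sx; have := size_exp _ (m ord_max) sy.
have := size_exp _ (tdeg g - mdeg m)%N sw.
have := size_polyMleq (hx ^+ m ord0 * hy ^+ m ord_max) (hw ^+ (tdeg g - mdeg m)).
have := size_polyMleq (hx ^+ m ord0) (hy ^+ m ord_max); lia.
Qed.

Lemma hsubst_eval (g : MP) (hx hy hw : {poly R}) t : hw.[t] != 0 ->
  (hsubst g hx hy hw).[t] = hw.[t] ^+ tdeg g * g.@[pt2 (hx.[t] / hw.[t], hy.[t] / hw.[t])].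
Proof.
move=> w0; rewrite meval_pt2 /hsubst horner_sum mulr_sumr !big_seq; apply: eq_bigr => m gm.
have -> : hw.[t] ^+ tdeg g = hw.[t] ^+ (tdeg g - mdeg m) * (hw.[t] ^+ m ord0 * hw.[t] ^+ m ord_max).
  by rewrite -!exprD -mdeg2 subnK ?mdeg_le_tdeg.
rewrite hornerZ !hornerM !horner_exp !expr_div_n.
have wx0 : hw.[t] ^+ m ord0 != 0 by rewrite expf_neq0.
have wy0 : hw.[t] ^+ m ord_max != 0 by rewrite expf_neq0.
move: wx0 wy0; set a := hw.[t] ^+ m ord0; set b := hw.[t] ^+ m ord_max.
set e := hw.[t] ^+ _; set x := hx.[t] ^+ _; set y := hy.[t] ^+ _.
by move=> a0 b0; field; rewrite a0 b0.
Qed.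

End RationalCurves.

Section VanishingOnCurves.
Variable R : realType.
Notation MP := {mpoly R[2]}.

Lemma mvanish_line_nat (g : MP) (p D : R * R) :
  (forall k : nat, g.@[pt2 (p.1 + k%:R * D.1, p.2 + k%:R * D.2)] = 0) ->
  forall s, g.@[pt2 (p.1 + s * D.1, p.2 + s * D.2)] = 0.
Proof.
move=> g0; set hx := Poly [:: p.1; D.1]; set hy := Poly [:: p.2; D.2].
have hxE s : hx.[s] = p.1 + s * D.1 by rewrite horner_Poly /=; ring.
have hyE s : hy.[s] = p.2 + s * D.2 by rewrite horner_Poly /=; ring.
have gE s : (hsubst g hx hy 1).[s] = g.@[pt2 (p.1 + s * D.1, p.2 + s * D.2)].
  by rewrite hsubst_eval hornerC ?oner_neq0 // expr1n mul1r !divr1 hxE hyE.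
have G0 : hsubst g hx hy 1 = 0 by apply: poly_eq0_nat_roots => k; rewrite /root gE g0.
by move=> s; rewrite -gE G0 horner0.
Qed.

(* [circle_at c u r] parametrises the circle of centre [c] and radius [r]
   minus the point [c + r u], which is reached at [t = oo]; [circle_coord]
   is its inverse. *)
Definition circle_at (c u : R * R) (r t : R) : R * R :=
  let z := circ_param t in
  (c.1 + r * (u.1 * z.1 - u.2 * z.2), c.2 + r * (u.2 * z.1 + u.1 * z.2)).

Definition circle_coord (c u : R * R) (r : R) (q : R * R) : R :=
  let z1 := (u.1 * (q.1 - c.1) + u.2 * (q.2 - c.2)) / r in
  let z2 := (u.1 * (q.2 - c.2) - u.2 * (q.1 - c.1)) / r in
  z2 / (1 - z1).

Lemma circle_coordK (c u q : R * R) (r : R) :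
  0 < r -> unit_vec u -> sqdist q c = r ^+ 2 ->
  q != (c.1 + r * u.1, c.2 + r * u.2) -> circle_at c u r (circle_coord c u r q) = q.
Proof.
rewrite /unit_vec => r0 u1 qc qM; have r0' := lt0r_neq0 r0.
set d1 := q.1 - c.1; set d2 := q.2 - c.2.
set z1 := (u.1 * d1 + u.2 * d2) / r; set z2 := (u.1 * d2 - u.2 * d1) / r.
have rot1 : u.1 * z1 - u.2 * z2 = d1 / r.
  by rewrite -[in RHS](mul1r d1) -u1 /z1 /z2; field.
have rot2 : u.2 * z1 + u.1 * z2 = d2 / r.
  by rewrite -[in RHS](mul1r d2) -u1 /z1 /z2; field.
have z_unit : z1 ^+ 2 + z2 ^+ 2 = 1.
  have -> : z1 ^+ 2 + z2 ^+ 2 = (u.1 ^+ 2 + u.2 ^+ 2) * (d1 ^+ 2 + d2 ^+ 2) / r ^+ 2.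
    by rewrite /z1 /z2; field.
  by rewrite u1 mul1r -[d1 ^+ 2 + _]/(sqdist q c) qc divff // expf_neq0.
have z1_neq1 : z1 != 1.
  apply: contraNneq qM => z11; have z20 : z2 = 0.
    by apply/eqP; rewrite -sqrf_eq0; move: z_unit; rewrite z11 expr1n => ?; apply/eqP; lra.
  move: rot1 rot2; rewrite z11 z20 !mulr1 !mulr0 subr0 addr0 => -> ->.
  by apply/eqP/injective_projections; rewrite /= mulrC divfK // addrC subrK.
rewrite /circle_at /circle_coord -/d1 -/d2 -/z1 -/z2 circ_paramK //= rot1 rot2.
by apply: injective_projections; rewrite /= mulrC divfK // addrC subrK.
Qed.

Lemma mvanish_circle (g : MP) (c u : R * R) (r : R) (L : seq (R * R)) :
  0 < r -> unit_vec u -> uniq L -> (2 * tdeg g < size L)%N ->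
  (forall q, q \in L ->
    [/\ sqdist q c = r ^+ 2, q != (c.1 + r * u.1, c.2 + r * u.2) & g.@[pt2 q] = 0]) ->
  forall q, sqdist q c = r ^+ 2 -> q != (c.1 + r * u.1, c.2 + r * u.2) -> g.@[pt2 q] = 0.
Proof.
move=> r0 u1 L_uniq L_size gL.
set hw := Poly [:: 1; 0; 1 : R].
set hx := Poly [:: c.1 - r * u.1; - (2 * r * u.2); c.1 + r * u.1].
set hy := Poly [:: c.2 - r * u.2; 2 * r * u.1; c.2 + r * u.2].
have hwE t : hw.[t] = t ^+ 2 + 1 by rewrite horner_Poly /=; ring.
have hw0 t : hw.[t] != 0 by rewrite hwE sqr_add1_neq0.
have curveE t : (hx.[t] / hw.[t], hy.[t] / hw.[t]) = circle_at c u r t.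
  rewrite /circle_at /circ_param /= hwE !horner_Poly /=.
  by congr (_, _); field; rewrite sqr_add1_neq0.
have gE t : (hsubst g hx hy hw).[t] = hw.[t] ^+ tdeg g * g.@[pt2 (circle_at c u r t)].
  by rewrite hsubst_eval ?curveE.
have G0 : hsubst g hx hy hw = 0.
  apply: (@roots_geq_poly_eq0 _ _ [seq circle_coord c u r q | q <- L]).
  - apply/allP => _ /mapP [q qL ->]; have [qc qM gq] := gL q qL.
    by rewrite /root gE circle_coordK // gq mulr0.
  - rewrite map_inj_in_uniq // => q q' qL q'L /(congr1 (circle_at c u r)).
    by have [? ? _] := gL q qL; have [? ? _] := gL q' q'L; rewrite !circle_coordK.
  - rewrite size_map; apply: leq_trans L_size.
    by apply: size_hsubst; apply: size_Poly.
move=> q qc qM; have := gE (circle_coord c u r q).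
rewrite G0 horner0 circle_coordK // => /esym/eqP.
by rewrite mulf_eq0 expf_eq0 (negbTE (hw0 _)) andbF => /eqP.
Qed.

Lemma exists_circle_point_notin (c : R * R) (r : R) (L : seq (R * R)) : 0 < r ->
  exists2 u : R * R, unit_vec u & (c.1 + r * u.1, c.2 + r * u.2) \notin L.
Proof.
move=> r0; pose M k := (c.1 + r * (circ_param k%:R).1, c.2 + r * (circ_param k%:R).2).
have M_inj : injective M.
  by move=> k l [] /addrI /(mulfI (lt0r_neq0 r0)) /circ_param_nat_inj.
have : ~~ all (mem L) [seq M k | k <- iota 0 (size L).+1].
  apply/negP => /allP /uniq_leq_size; rewrite map_inj_uniq ?iota_uniq //.
  by rewrite size_map size_iota ltnn => /(_ isT).
by case/allPn => _ /mapP [k _ ->] ML; exists (circ_param k%:R) => //; apply: circ_param_unit.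
Qed.

End VanishingOnCurves.

Section CurvesFromIrreducibles.
Variable R : realType.
Notation MP := {mpoly R[2]}.
Implicit Types (C : R * R -> Prop) (f : MP).

Lemma meval_pt2_val f (v : 'I_2 -> R) : f.@[v] = f.@[pt2 (v ord0, v ord_max)].
Proof. by apply: meval_eq => -[[|[|?]] ?] //=; congr (v _); apply: val_inj. Qed.

Lemma zero_set_scale C f (h : R * R -> R) (k : R) :
  k != 0 -> same_set C (zero_set f) -> (forall p, f.@[pt2 p] = k * h p) ->
  forall p, C p <-> h p = 0.
Proof.
move=> k0 Cf fE p; rewrite Cf /zero_set fE.
by split=> [/eqP|->]; rewrite ?mulr0 // mulf_eq0 (negbTE k0) => /eqP.
Qed.

Lemma mirreducible_line C f (p D : R * R) :
  mirreducible f -> same_set C (zero_set f) -> D != (0, 0) ->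
  (forall s, C (p.1 + s * D.1, p.2 + s * D.2)) -> is_line C.
Proof.
move=> irr Cf D0 C_line; have f0 s := proj1 (Cf _) (C_line s).
have [D1_0|D1_neq0] := eqVneq D.1 0.
  have D2_neq0 : D.2 != 0 by apply: contraNneq D0 => D2_0; apply/eqP/injective_projections.
  have [|k k0 fE] := @mirreducible_vanishing_on_line R ord0 ord_max f 0 p.1 isT irr.
    move=> v v0; rewrite meval_pt2_val -(f0 ((v ord_max - p.2) / D.2)) D1_0 v0 divfK //.
    by congr (_.@[pt2 (_, _)]); ring.
  exists 1, 0, (- p.1); split; first by rewrite xpair_eqE oner_eq0.
  move=> q; rewrite (zero_set_scale k0 Cf (h := fun q => q.1 - (0 * q.2 + p.1))).
    by split=> ?; lra.
  by move=> [x y]; rewrite fE.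
set al := D.2 / D.1; set be := p.2 - al * p.1.
have [|k k0 fE] := @mirreducible_vanishing_on_line R ord_max ord0 f al be isT irr.
  move=> v v1; rewrite meval_pt2_val -(f0 ((v ord0 - p.1) / D.1)) v1 divfK //.
  by congr (_.@[pt2 (_, _)]); rewrite /be /al; field.
exists (- al), 1, (- be); split; first by rewrite xpair_eqE oner_eq0 andbF.
move=> q; rewrite (zero_set_scale k0 Cf (h := fun q => q.2 - (al * q.1 + be))).
  by split=> ?; lra.
by move=> [x y]; rewrite fE.
Qed.

Lemma mirreducible_circle C f (c M : R * R) (r : R) :
  0 < r -> mirreducible f -> same_set C (zero_set f) ->
  (forall q, sqdist q c = r ^+ 2 -> q != M -> C q) -> is_circle C.
Proof.
move=> r0 irr Cf C_circle.
have [k k0 fE] := mirreducible_vanishing_on_circle r0 irr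
  (fun q qc qM => proj1 (Cf q) (C_circle q qc qM)).
exists c.1, c.2, r; split => // q; rewrite (zero_set_scale k0 Cf fE).
by rewrite /sqdist; split=> ?; lra.
Qed.

End CurvesFromIrreducibles.

Section PlaneIsometries.
Variable R : realType.
Implicit Types (p q t w : R * R) (T : R * R -> R * R).

(* In complex notation [direct w t p = w p + t] and [opposite w t p = w conj(p) + t]. *)
Definition direct w t p : R * R :=
  (w.1 * p.1 - w.2 * p.2 + t.1, w.2 * p.1 + w.1 * p.2 + t.2).
Definition opposite w t p : R * R :=
  (w.1 * p.1 + w.2 * p.2 + t.1, w.2 * p.1 - w.1 * p.2 + t.2).
Definition translation t := direct (1, 0) t.

Lemma isometry_dot T o p q : isometry T -> T (0, 0) = o ->
  ((T p).1 - o.1) * ((T q).1 - o.1) + ((T p).2 - o.2) * ((T q).2 - o.2) = p.1 * q.1 + p.2 * q.2.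
Proof.
move=> isoT To; have := isoT p q; have := isoT p (0, 0); have := isoT q (0, 0).
rewrite /sqdist /= To !subr0; nra.
Qed.

Lemma isometry_direct_or_opposite T : isometry T ->
  exists w t (b : bool), unit_vec w /\ T =1 (if b then opposite w t else direct w t).
Proof.
move=> isoT; set o := T (0, 0); have dot p q := isometry_dot p q isoT (erefl o).
set u1 := (T (1, 0)).1 - o.1; set u2 := (T (1, 0)).2 - o.2.
set v1 := (T (0, 1)).1 - o.1; set v2 := (T (0, 1)).2 - o.2.
have uu : u1 ^+ 2 + u2 ^+ 2 = 1 by rewrite !expr2 dot /=; ring.
have vv : v1 ^+ 2 + v2 ^+ 2 = 1 by rewrite !expr2 dot /=; ring.
have uv : u1 * v1 + u2 * v2 = 0 by rewrite dot /=; ring.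
set s := u1 * v2 - u2 * v1.
have s2 : s ^+ 2 = 1.
  have : (u1 ^+ 2 + u2 ^+ 2) * (v1 ^+ 2 + v2 ^+ 2) = (u1 * v1 + u2 * v2) ^+ 2 + s ^+ 2.
    by rewrite /s; ring.
  by rewrite uu vv uv mul1r expr0n add0r.
have v1E : v1 = - s * u2.
  have : (u1 ^+ 2 + u2 ^+ 2) * v1 = (u1 * v1 + u2 * v2) * u1 - s * u2 by rewrite /s; ring.
  by rewrite uu uv mul1r mul0r sub0r mulNr.
have v2E : v2 = s * u1.
  have : (u1 ^+ 2 + u2 ^+ 2) * v2 = (u1 * v1 + u2 * v2) * u2 + s * u1 by rewrite /s; ring.
  by rewrite uu uv mul1r mul0r add0r.
have TE p : T p = (u1 * p.1 - s * u2 * p.2 + o.1, u2 * p.1 + s * u1 * p.2 + o.2).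
  have := dot p (1, 0); have := dot p (0, 1); rewrite -/u1 -/u2 -/v1 -/v2 v1E v2E /=.
  set a := (T p).1 - o.1; set b := (T p).2 - o.2; rewrite !mulr0 !mulr1 addr0 add0r => <- <-.
  have -> : u1 * (a * u1 + b * u2) - s * u2 * (a * (- s * u2) + b * (s * u1)) =
    a * (u1 ^+ 2 + s ^+ 2 * u2 ^+ 2) + b * (u1 * u2) * (1 - s ^+ 2) by ring.
  have -> : u2 * (a * u1 + b * u2) + s * u1 * (a * (- s * u2) + b * (s * u1)) =
    a * (u1 * u2) * (1 - s ^+ 2) + b * (u2 ^+ 2 + s ^+ 2 * u1 ^+ 2) by ring.
  rewrite s2 !mul1r subrr !mulr0 addr0 add0r (addrC (u2 ^+ 2)) uu !mulr1.
  by rewrite /a /b !subrK; case: (T p).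
exists (u1, u2), o.
have : (s - 1) * (s + 1) = s ^+ 2 - 1 by ring.
rewrite s2 subrr => /eqP; rewrite mulf_eq0 subr_eq0 addr_eq0 => /orP [/eqP s1|/eqP s1].
- by exists false; split => // p; rewrite TE s1 !mul1r.
- by exists true; split => // p; rewrite TE s1 /opposite /=; congr (_, _); ring.
Qed.

End PlaneIsometries.

Section DirectIsometries.
Variable R : realType.
Implicit Types (p q c e t w z : R * R).

Lemma sqr_norm_gt0 (a b : R) : (a, b) != (0, 0) -> 0 < a ^+ 2 + b ^+ 2.
Proof.
rewrite xpair_eqE negb_and => ab; have a2 := sqr_ge0 a; have b2 := sqr_ge0 b.
have sqr_gt0 (x : R) : x != 0 -> 0 < x ^+ 2 by move=> x0; rewrite exprn_even_gt0 //= x0.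
by case/orP: ab => /sqr_gt0 ?; lra.
Qed.

Lemma sqdist_direct w t p q :
  sqdist (direct w t p) (direct w t q) = (w.1 ^+ 2 + w.2 ^+ 2) * sqdist p q.
Proof. by rewrite /sqdist /=; ring. Qed.

Lemma direct_isometry w t : unit_vec w -> isometry (direct w t).
Proof. by move=> w1 p q; rewrite sqdist_direct w1 mul1r. Qed.

Definition rot_about w c p : R * R :=
  (w.1 * (p.1 - c.1) - w.2 * (p.2 - c.2) + c.1, w.2 * (p.1 - c.1) + w.1 * (p.2 - c.2) + c.2).
Definition conj_vec w : R * R := (w.1, - w.2).

Lemma unit_conj_vec w : unit_vec w -> unit_vec (conj_vec w).
Proof. by rewrite /unit_vec /= sqrrN. Qed.

Lemma rot_aboutK w c : unit_vec w -> cancel (rot_about w c) (rot_about (conj_vec w) c).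
Proof.
move=> w1 p; rewrite /rot_about /=; apply: injective_projections => /=.
  transitivity ((w.1 ^+ 2 + w.2 ^+ 2) * (p.1 - c.1) + c.1); first by ring.
  by rewrite w1 mul1r subrK.
transitivity ((w.1 ^+ 2 + w.2 ^+ 2) * (p.2 - c.2) + c.2); first by ring.
by rewrite w1 mul1r subrK.
Qed.

Lemma rot_about_conjK w c : unit_vec w -> cancel (rot_about (conj_vec w) c) (rot_about w c).
Proof.
move=> w1; have := rot_aboutK c (unit_conj_vec w1).
by rewrite /conj_vec /= opprK; case: w {w1}.
Qed.

Lemma direct_fixpoint w t : w != (1, 0) -> exists c, direct w t c = c.
Proof.
move=> w_neq1; set n := (1 - w.1) ^+ 2 + w.2 ^+ 2.
have n0 : n != 0.
  apply/lt0r_neq0/sqr_norm_gt0; apply: contraNneq w_neq1 => -[? ?].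
  by apply/eqP/injective_projections => /=; lra.
exists (((1 - w.1) * t.1 - w.2 * t.2) / n, (w.2 * t.1 + (1 - w.1) * t.2) / n).
by apply: injective_projections => /=; rewrite /n; field; rewrite -/n.
Qed.

Lemma direct_rot_about w t c : direct w t c = c -> direct w t =1 rot_about w c.
Proof.
move=> wc p; have := congr1 fst wc; have := congr1 snd wc.
by rewrite /direct /rot_about /= => ? ?; apply: injective_projections => /=; lra.
Qed.

(* The commutator of the rotations by [w] about [c] and by [z] about [e] is the
   translation by [(1 - w) (1 - z) (c - e)] in complex notation. *)
Definition commutator_shift w z c e : R * R :=
  direct (1 - w.1, - w.2) 0 (direct (1 - z.1, - z.2) 0 (c.1 - e.1, c.2 - e.2)).

Lemma commutator_rot_about w z c e : unit_vec w -> unit_vec z ->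
  rot_about w c \o rot_about z e \o rot_about (conj_vec w) c \o rot_about (conj_vec z) e
  =1 translation (commutator_shift w z c e).
Proof.
rewrite /unit_vec => w1 z1 p.
rewrite /rot_about /translation /commutator_shift /direct /=.
apply: injective_projections => /=; apply/eqP; rewrite -subr_eq0.
  rewrite (_ : _ - _ = (w.1 ^+ 2 + w.2 ^+ 2 - 1) * (z.1 * (e.1 - c.1) - z.2 * (e.2 - c.2)
      + (z.1 ^+ 2 + z.2 ^+ 2) * (p.1 - e.1)) + (z.1 ^+ 2 + z.2 ^+ 2 - 1) * (p.1 - e.1)).
    by rewrite w1 z1 subrr !mul0r addr0.
  by ring.
rewrite (_ : _ - _ = (w.1 ^+ 2 + w.2 ^+ 2 - 1) * (z.2 * (e.1 - c.1) + z.1 * (e.2 - c.2)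
    + (z.1 ^+ 2 + z.2 ^+ 2) * (p.2 - e.2)) + (z.1 ^+ 2 + z.2 ^+ 2 - 1) * (p.2 - e.2)).
  by rewrite w1 z1 subrr !mul0r addr0.
by ring.
Qed.

End DirectIsometries.

Lemma opposite_comp (R : realType) (w t z s p : R * R) :
  opposite w t (opposite z s p) = direct (opposite w 0 z) (opposite w t s) p.
Proof. by rewrite /opposite /direct /=; congr (_, _); ring. Qed.

Lemma unit_opposite0 (R : realType) (w z : R * R) :
  unit_vec w -> unit_vec z -> unit_vec (opposite w 0 z).
Proof.
rewrite /unit_vec /= => w1 z1; rewrite !addr0.
by rewrite -[RHS]mul1r -{1}w1 -z1; ring.
Qed.

Lemma direct_eq_of_fixpoint (R : realType) (w t w' t' c p : R * R) :
  direct w t c = c -> direct w' t' c = c -> direct w t p = direct w' t' p -> p != c ->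
  direct w t =1 direct w' t'.
Proof.
move=> /direct_rot_about wc /direct_rot_about w'c; rewrite wc w'c => wp pc x.
rewrite wc w'c; suff -> : w = w' by [].
have := congr1 fst wp; have := congr1 snd wp; rewrite /rot_about /=.
set d1 := p.1 - c.1; set d2 := p.2 - c.2; set a := w.1 - w'.1; set b := w.2 - w'.2 => e2 e1.
have E1 : a * d1 - b * d2 = 0 by rewrite /a /b; lra.
have E2 : b * d1 + a * d2 = 0 by rewrite /a /b; lra.
have /lt0r_neq0 d0 : 0 < d1 ^+ 2 + d2 ^+ 2.
  apply: sqr_norm_gt0; apply: contraNneq pc => -[]; rewrite /d1 /d2 => ? ?.
  by apply/eqP/injective_projections; lra.
have : a * (d1 ^+ 2 + d2 ^+ 2) = d1 * (a * d1 - b * d2) + d2 * (b * d1 + a * d2) by ring.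
have : b * (d1 ^+ 2 + d2 ^+ 2) = d1 * (b * d1 + a * d2) - d2 * (a * d1 - b * d2) by ring.
rewrite E1 E2 !mulr0 addr0 subr0 => /eqP + /eqP.
rewrite !mulf_eq0 (negbTE d0) !orbF /a /b !subr_eq0 => /eqP ? /eqP ?.
exact: injective_projections.
Qed.

Section SymmetryGroup.
Variables (R : realType) (C : R * R -> Prop).
Implicit Types (S T U : R * R -> R * R) (p q : R * R).

Lemma isometry_inj T : isometry T -> injective T.
Proof.
move=> isoT p q Tpq; have := isoT p q; rewrite Tpq /sqdist !subrr expr0n /= addr0.
move/esym/eqP; rewrite paddr_eq0 ?sqr_ge0 // !sqrf_eq0 !subr_eq0 => /andP [/eqP ? /eqP ?].
exact: injective_projections.
Qed.

Lemma eq_symmetry S T : S =1 T -> symmetry_of C S -> symmetry_of C T.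
Proof.
move=> ST [isoS CS]; split=> [p q|p]; first by rewrite -!ST.
by rewrite -CS; split=> -[q [Cq <-]]; exists q.
Qed.

Lemma symmetry_image T q : symmetry_of C T -> C q -> C (T q).
Proof. by move=> [_ CT] Cq; apply/CT; exists q. Qed.

Lemma symmetry_comp S T : symmetry_of C S -> symmetry_of C T -> symmetry_of C (S \o T).
Proof.
move=> symS symT; have [isoS CS] := symS; have [isoT CT] := symT.
split=> [p q|p]; first by rewrite /= isoS isoT.
split=> [[q [Cq <-]]|/CS [q1 [/CT [q [Cq <-]] <-]]]; last by exists q.
exact/(symmetry_image symS)/(symmetry_image symT).
Qed.

Lemma symmetry_inv T U : symmetry_of C T -> cancel T U -> cancel U T -> symmetry_of C U.
Proof.
move=> [isoT CT] TK UK; split=> [p q|p]; first by rewrite -isoT !UK.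
split=> [[q [Cq <-]]|Cp]; last by exists (T p); split; [apply/CT; exists p | ].
by move: Cq; rewrite -(UK q) => /CT [q' [Cq' /(isometry_inj isoT) <-]]; rewrite TK.
Qed.

End SymmetryGroup.

Lemma sqnorm_direct0 (R : realType) (w p : R * R) :
  (direct w 0 p).1 ^+ 2 + (direct w 0 p).2 ^+ 2 = (w.1 ^+ 2 + w.2 ^+ 2) * (p.1 ^+ 2 + p.2 ^+ 2).
Proof. by rewrite /direct /=; ring. Qed.

Lemma commutator_shift_neq0 (R : realType) (w z c e : R * R) :
  w != (1, 0) -> z != (1, 0) -> c != e -> commutator_shift w z c e != (0, 0).
Proof.
move=> w1 z1 ce.
have pos (v : R * R) : v != (1, 0) -> 0 < (1 - v.1) ^+ 2 + (- v.2) ^+ 2.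
  move=> v1; apply: sqr_norm_gt0; apply: contraNneq v1 => -[? ?].
  by apply/eqP/injective_projections => /=; lra.
have : 0 < (commutator_shift w z c e).1 ^+ 2 + (commutator_shift w z c e).2 ^+ 2.
  rewrite /commutator_shift !sqnorm_direct0 /=; apply: mulr_gt0 (pos _ w1) (mulr_gt0 (pos _ z1) _).
  apply: sqr_norm_gt0; apply: contraNneq ce => -[? ?].
  by apply/eqP/injective_projections; lra.
by apply: contraTneq => ->; rewrite /= expr0n addr0 ltxx.
Qed.

Section TwoCentres.
Variables (R : realType) (C : R * R -> Prop).

Lemma rot_about_symmetry_inv (w c : R * R) : unit_vec w ->
  symmetry_of C (rot_about w c) -> symmetry_of C (rot_about (conj_vec w) c).
Proof. by move=> w1 /symmetry_inv; apply; [apply: rot_aboutK | apply: rot_about_conjK]. Qed.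

Lemma translation_of_two_centres (w z c e : R * R) :
  unit_vec w -> unit_vec z -> w != (1, 0) -> z != (1, 0) -> c != e ->
  symmetry_of C (rot_about w c) -> symmetry_of C (rot_about z e) ->
  exists2 D, D != (0, 0) & symmetry_of C (translation D).
Proof.
move=> w1 z1 wn zn ce symw symz; exists (commutator_shift w z c e).
  exact: commutator_shift_neq0.
apply: eq_symmetry (commutator_rot_about c e w1 z1) _.
apply: symmetry_comp; last exact: rot_about_symmetry_inv.
apply: symmetry_comp; last exact: rot_about_symmetry_inv.
exact: symmetry_comp.
Qed.

End TwoCentres.

Lemma tdeg_gt0 (R : realType) (g : {mpoly R[2]}) (p : R * R) :
  g != 0 -> g.@[pt2 p] = 0 -> (0 < tdeg g)%N.
Proof.
move=> g0 gp; rewrite lt0n; apply: contraNneq g0 => deg0.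
have /msize1_polyC gE : (msize g <= 1)%N by move: deg0; rewrite /tdeg; lia.
by move: gp; rewrite gE mevalC => ->; rewrite mpolyC0.
Qed.

Section SymmetriesOfIrreducibleCurve.
Variables (R : realType) (C : R * R -> Prop) (f g : {mpoly R[2]}).
Hypotheses (f_irr : mirreducible f) (Cf : same_set C (zero_set f)).
Hypotheses (g_neq0 : g != 0) (Cg : same_set C (zero_set g)).
Hypotheses (C_inf : infinite_set C) (C_not_line : ~ is_line C) (C_not_circle : ~ is_circle C).

Lemma translation_symmetry_trivial (D : R * R) : symmetry_of C (translation D) -> D = (0, 0).
Proof.
move=> symD; apply/eqP; apply: contraT => D0; have [p [Cp _]] := C_inf [::].
have C_nat k : C (p.1 + k%:R * D.1, p.2 + k%:R * D.2).
  elim: k => [|k IH]; first by rewrite !mul0r !addr0; case: (p) Cp.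
  suff -> : (p.1 + k.+1%:R * D.1, p.2 + k.+1%:R * D.2) =
    translation D (p.1 + k%:R * D.1, p.2 + k%:R * D.2) by apply: symmetry_image.
  by rewrite /translation /direct /= -addn1 natrD; congr (_, _); ring.
case: C_not_line; apply: (mirreducible_line f_irr Cf D0) => s.
by apply/Cf/mvanish_line_nat => k; apply/Cf.
Qed.

Lemma direct_symmetry_fixes (w t z s c : R * R) :
  unit_vec w -> unit_vec z -> w != (1, 0) -> direct w t c = c ->
  symmetry_of C (direct w t) -> symmetry_of C (direct z s) -> direct z s c = c.
Proof.
move=> w1 z1 wn wc symw symz; have [z_id|zn] := eqVneq z (1, 0).
  move: symz; rewrite z_id => /translation_symmetry_trivial ->.
  by rewrite /direct /=; apply: injective_projections => /=; ring.
have [e ze] := direct_fixpoint s zn; have [->|ce] := eqVneq c e; first exact: ze.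
have [D D0] := translation_of_two_centres w1 z1 wn zn ce
  (eq_symmetry (direct_rot_about wc) symw) (eq_symmetry (direct_rot_about ze) symz).
by move/translation_symmetry_trivial/eqP; rewrite (negbTE D0).
Qed.

Lemma direct_symmetries_common_fixpoint (I : eqType) (s : seq I) (T : I -> R * R -> R * R)
    (w t : I -> R * R) :
  uniq s -> {in s &, forall i j, T i =1 T j -> i = j} ->
  (forall i, i \in s -> [/\ unit_vec (w i), T i =1 direct (w i) (t i) & symmetry_of C (T i)]) ->
  (1 < size s)%N -> exists c, forall i, i \in s -> T i c = c.
Proof.
move=> s_uniq T_inj Ts s_gt1.
have symD i : i \in s -> symmetry_of C (direct (w i) (t i)).
  by move=> /Ts [_ Ti symi]; apply: eq_symmetry Ti symi.
have T_id i : i \in s -> w i = (1, 0) -> T i =1 id.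
  move=> i_s wi; have [_ Ti _] := Ts i i_s.
  have := symD i i_s; rewrite wi => /translation_symmetry_trivial ti q.
  by rewrite Ti wi ti /direct /=; apply: injective_projections => /=; ring.
have /hasP [i0 i0_s w0] : has (fun i => w i != (1, 0)) s.
  apply/negPn/negP => /hasPn all_id.
  have wid j : j \in s -> w j = (1, 0) by move=> /all_id; rewrite negbK => /eqP.
  have [i i_s] : exists i, i \in s by case: (s) s_gt1 => // i ? _; exists i; rewrite mem_head.
  have : {subset s <= [:: i]}.
    move=> j j_s; rewrite mem_seq1; apply/eqP/T_inj => // q.
    by rewrite (T_id j) ?(T_id i) ?wid.
  by move/(uniq_leq_size s_uniq) => /=; lia.
have [c c_fix] := direct_fixpoint (t i0) w0; have [u0 _ _] := Ts i0 i0_s.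
exists c => i i_s; have [ui Ti _] := Ts i i_s.
by rewrite Ti; apply: (direct_symmetry_fixes u0 ui w0 c_fix); apply: symD.
Qed.

Lemma direct_symmetries_bound (I : eqType) (s : seq I) (T : I -> R * R -> R * R)
    (w t : I -> R * R) :
  uniq s -> {in s &, forall i j, T i =1 T j -> i = j} ->
  (forall i, i \in s -> [/\ unit_vec (w i), T i =1 direct (w i) (t i) & symmetry_of C (T i)]) ->
  (size s <= 2 * tdeg g)%N.
Proof.
move=> s_uniq T_inj Ts; rewrite leqNgt; apply/negP => s_big.
have [p0 [Cp0 _]] := C_inf [::]; have := tdeg_gt0 g_neq0 (proj1 (Cg p0) Cp0).
move=> d_gt0; have s_gt1 : (1 < size s)%N by lia.
have [c c_fix] := direct_symmetries_common_fixpoint s_uniq T_inj Ts s_gt1.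
have fixes i : i \in s -> direct (w i) (t i) c = c.
  by move=> i_s; have [_ Ti _] := Ts i i_s; rewrite -Ti c_fix.
have [p [Cp]] := C_inf [:: c]; rewrite mem_seq1 => p_c.
have pc_gt0 : 0 < sqdist p c.
  apply: sqr_norm_gt0; apply: contraNneq p_c => -[? ?].
  by apply/eqP/injective_projections; lra.
set r := Num.sqrt (sqdist p c).
have r_gt0 : 0 < r by rewrite sqrtr_gt0.
have r2 : r ^+ 2 = sqdist p c by rewrite sqr_sqrtr // ltW.
set L := [seq T i p | i <- s].
have [u u1 ML] := exists_circle_point_notin c L r_gt0.
set M := (c.1 + r * u.1, c.2 + r * u.2).
apply: C_not_circle; apply: (mirreducible_circle (c := c) (M := M) r_gt0 f_irr Cf) => q qc qM.
apply/Cg; apply: (mvanish_circle (c := c) r_gt0 u1 (L := L)) => //.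
- rewrite map_inj_in_uniq // => i j i_s j_s Tij; apply: (T_inj i j i_s j_s).
  have [_ Ti _] := Ts i i_s; have [_ Tj _] := Ts j j_s.
  move: Tij; rewrite Ti Tj => /(direct_eq_of_fixpoint (fixes i i_s) (fixes j j_s))/(_ p_c) Tij x.
  by rewrite Ti Tj Tij.
- by rewrite size_map.
move=> _ /mapP [i i_s ->]; have [ui Ti symi] := Ts i i_s; split.
- by have := direct_isometry (t i) ui p c; rewrite (fixes i i_s) -Ti r2.
- by apply: contraNneq ML => <-; apply: map_f.
- exact/Cg/(symmetry_image symi).
Qed.

Lemma opposite_symmetries_bound (I : eqType) (s : seq I) (T : I -> R * R -> R * R)
    (w t : I -> R * R) :
  uniq s -> {in s &, forall i j, T i =1 T j -> i = j} ->
  (forall i, i \in s -> [/\ unit_vec (w i), T i =1 opposite (w i) (t i) & symmetry_of C (T i)]) ->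
  (size s <= 2 * tdeg g)%N.
Proof.
case: s => [|i0 s] // s_uniq T_inj Ts; have [u0 T0 sym0] := Ts i0 (mem_head _ _).
apply: (direct_symmetries_bound (T := fun i => T i0 \o T i)
  (w := fun i => opposite (w i0) 0 (w i)) (t := fun i => opposite (w i0) (t i0) (t i))) => //.
  move=> i j i_s j_s Tij; apply: T_inj => // x.
  exact: (isometry_inj (proj1 sym0)) (Tij x).
move=> i i_s; have [ui Ti symi] := Ts i i_s.
split; [exact: unit_opposite0 | move=> x /= | exact: symmetry_comp].
by rewrite Ti T0 opposite_comp.
Qed.

End SymmetriesOfIrreducibleCurve.

Theorem lemma2p6 (R : realType) (C : R * R -> Prop) (d : nat) :
  plane_curve C -> irreducible_curve C -> curve_degree C d ->
  ~ is_line C -> ~ is_circle C ->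
  forall (n : nat) (T : 'I_n -> (R * R -> R * R)),
    (forall i j, i != j -> T i <> T j) ->
    (forall i, symmetry_of C (T i)) ->
    (n <= 4 * d)%N.
Proof.
move=> [C_inf _] [f [f_irr Cf]] [[g [g0 Cg <-]] _] C_not_line C_not_circle n T T_neq symT.
have T_inj i j : T i =1 T j -> i = j.
  by move=> /functional_extensionality Tij; apply/eqP; apply: contraT => /T_neq.
have [w /fin_all_exists [t /fin_all_exists [b wtb]]] :=
  fin_all_exists (fun i => isometry_direct_or_opposite (proj1 (symT i))).
set opp := [seq i <- enum 'I_n | b i]; set dir := [seq i <- enum 'I_n | ~~ b i].
have enum_filter_uniq (P : pred 'I_n) : uniq [seq i <- enum 'I_n | P i].
  by rewrite filter_uniq ?enum_uniq.
have opp_bound : (size opp <= 2 * tdeg g)%N.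
  apply: (opposite_symmetries_bound f_irr Cf g0 Cg C_inf C_not_line C_not_circle (w := w) (t := t)).
  - exact: enum_filter_uniq.
  - by move=> i j _ _; apply: T_inj.
  by move=> i; rewrite mem_filter => /andP [bi _]; have [? Ti] := wtb i; rewrite bi in Ti.
have dir_bound : (size dir <= 2 * tdeg g)%N.
  apply: (direct_symmetries_bound f_irr Cf g0 Cg C_inf C_not_line C_not_circle (w := w) (t := t)).
  - exact: enum_filter_uniq.
  - by move=> i j _ _; apply: T_inj.
  by move=> i; rewrite mem_filter => /andP [/negbTE bi _]; have [? Ti] := wtb i; rewrite bi in Ti.
have : n = (size opp + size dir)%N by rewrite !size_filter count_predC size_enum_ord.
lia.
Qed.
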